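(* Let $g\ge1$ be an integer and let $a,b$ be integers with $0<a<b$. Define $\gamma_1=a$, $\gamma_2=b$, and for $r\ge3$ let $\gamma_r$ be the smallest integer greater than $\gamma_{r-1}$ such that $\{\gamma_1,\dots,\gamma_r\}$ is a $\mathcal D[g]$ set. Then there is an integer $n_0=n_0(a,b,g)$ such that $\gamma_n=2\gamma_{n-1}$ for all $n\ge n_0$.
   Context: For a positive integer $g$, a set $\mathcal S=\{a_1<a_2<\cdots\}\subset\mathbb N$ is a $\mathcal D[g]$ set if for every $m$ (for which $a_m$ exists) and every $t\in\mathbb Z$, $$\left|\left\{I\subseteq\{1,\dots,m\}:\ \sum_{i\in I}a_i=t\right\}\right|\le g.$$ *)

From mathcomp Require Import all_boot.
Set Implicit Arguments. Unset Strict Implicit. Unset Printing Implicit Defensive.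

(* Number of index subsets I of {0..size s - 1} with sum_{i in I} s_i = t.
   (Sums of naturals are naturals, so negative targets t always give 0
    and it suffices to consider t : nat.) *)
Definition nreps (s : seq nat) (t : nat) : nat :=
  #|[set I : {set 'I_(size s)} | (\sum_(i in I) nth 0 s i) == t]|.

Definition DgSeq (g : nat) (s : seq nat) : Prop :=
  forall m t, m <= size s -> nreps (take m s) t <= g.

Definition gprefix (gam : nat -> nat) (r : nat) : seq nat :=
  [seq gam i | i <- iota 1 r].

From mathcomp Require Import all_boot zify.
From Stdlib Require Import Classical.

(* Let r_n(t) count the representations of t as a subset sum of gam_1, ..., gam_n,
   and call x admissible after n when r_n(t + x) + r_n(t) <= g for all t, so that
   appending x keeps the D[g] property.  By greediness gam_(n+1) is the least
   admissible number above gam_n; as gam_1 + ... + gam_n + 1 is admissible, the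
   excess e_n = gam_1 + ... + gam_n + 1 - gam_(n+1) is nonnegative.
   The gap gam_(n+2) - gam_(n+1) is admissible after n, and a fixed gap d occurs
   only finitely often, since every occurrence raises the number of
   representations of some c + d with c representable.  Some r_J(t) exceeds g/2,
   so no gam_j with j > J is admissible after j or later; hence an admissible
   number below gam_(n+1) is at most gam_(J+2), and eventually the gap exceeds
   gam_(n+1), i.e. gam_(n+2) >= 2 gam_(n+1).  From then on e_n is nonincreasing,
   hence eventually constant, and e_(n+1) = e_n means gam_(n+2) = 2 gam_(n+1). *)

Definition nsubsum n (w : nat -> nat) t :=
  #|[set I : {set 'I_n} | \sum_(i in I) w i == t]|.

Lemma nsubsum0 w t : nsubsum 0 w t = (t == 0).
Proof.
rewrite /nsubsum (eq_finset (fun _ => 0 == t)) => [|I]; last first.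
  by rewrite big_pred0 // => -[].
rewrite eq_sym; case: (t == 0); last by rewrite cards0.
rewrite (_ : [set _ | true] = [set set0]) ?cards1 //.
by apply/setP => I; rewrite !inE; apply/esym/eqP/setP => -[].
Qed.

Section SubsetSumRecursion.
Variables (n : nat) (w : nat -> nat).

Let up (J : {set 'I_n}) : {set 'I_n.+1} := lift ord_max @: J.
Let down (I : {set 'I_n.+1}) : {set 'I_n} := lift ord_max @^-1: I.

Let max_notin_up J : ord_max \notin up J.
Proof. by apply/imsetP => -[j _ /eqP]; rewrite (negPf (neq_lift _ _)). Qed.

Let down_up J : down (up J) = J.
Proof. by apply/setP => j; rewrite inE mem_imset //; apply: lift_inj. Qed.

Let down_max_up J : down (ord_max |: up J) = J.
Proof.
apply/setP => j; rewrite !inE eq_sym (negPf (neq_lift _ _)) mem_imset //.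
exact: lift_inj.
Qed.

Let up_down I : up (down I) = I :\ ord_max.
Proof.
apply/setP => i; rewrite in_setD1.
case: (unliftP ord_max i) => [j ->|->]; last by rewrite eqxx (negPf (max_notin_up _)).
by rewrite eq_sym (negPf (neq_lift _ _)) mem_imset ?inE //; apply: lift_inj.
Qed.

Let sum_up J : \sum_(i in up J) w i = \sum_(j in J) w j.
Proof.
rewrite big_imset; last by move=> i j _ _; apply: lift_inj.
by apply: eq_bigr => j _; rewrite lift_max.
Qed.

Lemma nsubsumS t :
  nsubsum n.+1 w t = nsubsum n w t + (if w n <= t then nsubsum n w (t - w n) else 0).
Proof.
rewrite /nsubsum -(cardsID [set I : {set 'I_n.+1} | ord_max \in I]) addnC.
congr (_ + _).
  rewrite -(card_imset _ (can_inj down_up)); apply: eq_card => I.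
  rewrite !inE; apply/andP/imsetP => [[maxI sumI]|[J]]; last first.
    by rewrite inE => sumJ ->; rewrite sum_up max_notin_up.
  have I_eq : up (down I) = I.
    by apply/setP => i; rewrite up_down in_setD1 andb_idl //; apply: contraTneq => ->.
  by exists (down I); rewrite // inE -sum_up I_eq.
have up_inj : injective (fun J => ord_max |: up J) := can_inj down_max_up.
case: leqP => [le_wt|lt_tw].
  rewrite -(card_imset _ up_inj); apply: eq_card => I.
  rewrite !inE; apply/andP/imsetP => [[/eqP sumI maxI]|[J]]; last first.
    rewrite inE => /eqP sumJ ->; rewrite big_setU1 ?max_notin_up //= sum_up sumJ.
    by rewrite subnKC // setU11.
  have I_eq : ord_max |: up (down I) = I by rewrite up_down setD1K.
  exists (down I) => //; rewrite inE -sum_up -sumI -{2}I_eq big_setU1 ?max_notin_up //=.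
  by rewrite addKn.
apply/eqP; rewrite cards_eq0; apply/eqP/setP => I; rewrite !inE.
apply/negP => /andP[/eqP sumI maxI].
move: lt_tw; rewrite -sumI -(setD1K maxI) big_setU1 ?setD11 //=.
by rewrite ltnNge leq_addr.
Qed.
End SubsetSumRecursion.

Lemma eq_nsubsum {n w w'} t :
  (forall i, i < n -> w i = w' i) -> nsubsum n w t = nsubsum n w' t.
Proof.
move=> eq_w; apply: eq_card => I; rewrite !inE.
by rewrite (eq_bigr (fun i : 'I_n => w' i)) // => i _; apply: eq_w.
Qed.

Lemma nreps_nil t : nreps [::] t = (t == 0).
Proof. exact: nsubsum0. Qed.

Lemma nreps_rcons s x t :
  nreps (rcons s x) t = nreps s t + (if x <= t then nreps s (t - x) else 0).
Proof.
have eq_s i : i < size s -> nth 0 (rcons s x) i = nth 0 s i by rewrite nth_rcons => ->.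
rewrite /nreps -/(nsubsum _ _ t) size_rcons nsubsumS nth_rcons ltnn eqxx.
by rewrite !(eq_nsubsum _ eq_s).
Qed.

Lemma nreps_rcons_addn s x u : nreps (rcons s x) (u + x) = nreps s (u + x) + nreps s u.
Proof. by rewrite nreps_rcons leq_addl addnK. Qed.

Lemma leq_nreps_rcons s x t : nreps s t <= nreps (rcons s x) t.
Proof. by rewrite nreps_rcons leq_addr. Qed.

Lemma nreps_gt_sumn s t : sumn s < t -> nreps s t = 0.
Proof.
elim/last_ind: s t => [|s x IH] t; first by rewrite nreps_nil; case: t.
rewrite sumn_rcons nreps_rcons => lt_t.
rewrite IH; last exact: leq_ltn_trans (leq_addr _ _) lt_t.
by case: leqP => // le_xt; rewrite IH // ltn_subRL addnC.
Qed.

Lemma DgSeq_nreps {g s} t : DgSeq g s -> nreps s t <= g.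
Proof. by move=> Ds; rewrite -(take_size s); apply: Ds. Qed.

Lemma DgSeq_take {g s} m : DgSeq g s -> DgSeq g (take m s).
Proof.
move=> Ds k t; rewrite size_take_min => le_k; rewrite -take_min.
by apply: Ds; exact: leq_trans (geq_minl _ _) (leq_trans le_k (geq_minr _ _)).
Qed.

Definition admissible g s x := forall t, nreps s (t + x) + nreps s t <= g.

Lemma DgSeq_rcons {g s x} : DgSeq g s -> admissible g s x -> DgSeq g (rcons s x).
Proof.
move=> Ds adm m t; rewrite size_rcons; case: ltngtP => // [lt_m|->] _.
  by rewrite -cats1 (takel_cat _ lt_m); apply: Ds.
rewrite -(size_rcons s x) take_size nreps_rcons; case: (leqP x t) => [le_xt|_].
  by have := adm (t - x); rewrite subnK.
by rewrite addn0 DgSeq_nreps.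
Qed.

Lemma gprefixS gam n : gprefix gam n.+1 = rcons (gprefix gam n) (gam n.+1).
Proof. by rewrite /gprefix -[n.+1]addn1 iotaD map_cat cats1 add1n addn1. Qed.

Lemma take_gprefix gam m n : take m (gprefix gam n) = gprefix gam (minn m n).
Proof. by rewrite /gprefix -map_take take_iota. Qed.

Lemma nonincreasing_eventually_constant (f : nat -> nat) N :
  (forall n, N <= n -> f n.+1 <= f n) ->
  exists2 n0, N <= n0 & forall n, n0 <= n -> f n = f n0.
Proof.
move=> f_dec.
suff: forall v M, N <= M -> f M = v ->
    exists2 n0, N <= n0 & forall n, n0 <= n -> f n = f n0.
  by apply.
elim/ltn_ind => v IH M le_NM fM.
have f_le : {in [pred n | M <= n] &, {homo f : i j / i <= j >-> j <= i}}.
  apply: homo_leq_in => [x|y x z le_yx le_zy|i j le_Mi _ k /andP[lt_ik _]|i le_Mi _].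
  - exact: leqnn.
  - exact: leq_trans le_zy le_yx.
  - exact: leq_trans le_Mi (ltnW lt_ik).
  - exact: f_dec (leq_trans le_NM le_Mi).
case: (classic (exists n, M <= n /\ f n != f M)) => [[n [le_Mn neq]]|const].
  have lt_v : f n < v by rewrite -fM ltn_neqAle neq f_le ?inE.
  exact: IH (f n) lt_v n (leq_trans le_NM le_Mn) erefl.
exists M => // n le_Mn; apply/eqP/contraT => neq.
by case: const; exists n.
Qed.

Section GreedyDgSequence.
Variables (g : nat) (gam : nat -> nat).
Hypothesis gam_lt12 : gam 1 < gam 2.
Hypothesis greedy : forall r, 3 <= r ->
  [/\ gam r.-1 < gam r,
      DgSeq g (gprefix gam r) &
      forall x, gam r.-1 < x -> x < gam r -> ~ DgSeq g (rcons (gprefix gam r.-1) x)].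

Local Notation rep n := (nreps (gprefix gam n)).
Local Notation admissible_after n := (admissible g (gprefix gam n)).

Lemma repS_addn n u : rep n.+1 (u + gam n.+1) = rep n (u + gam n.+1) + rep n u.
Proof. by rewrite gprefixS nreps_rcons_addn. Qed.

Lemma rep_mono t : {homo (fun n => rep n t) : m n / m <= n}.
Proof. by apply: homo_leq leqnn leq_trans _ => n; rewrite gprefixS leq_nreps_rcons. Qed.

Lemma DgSeq_gprefix n : DgSeq g (gprefix gam n).
Proof.
have [_ Dg _] := greedy (n + 3) (leq_addl n 3).
by rewrite -(minn_idPl (leq_addr 3 n)) -take_gprefix; apply: DgSeq_take.
Qed.

Lemma rep_le n t : rep n t <= g.
Proof. exact/DgSeq_nreps/DgSeq_gprefix. Qed.

Lemma admissible_mono {m n x} : m <= n -> admissible_after n x -> admissible_after m x.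
Proof. by move=> le_mn adm t; apply: leq_trans _ (adm t); rewrite leq_add ?rep_mono. Qed.

Lemma gam_ltS n : 0 < n -> gam n < gam n.+1.
Proof. by case: n => [|[|n]] // _; case: (greedy n.+3 isT). Qed.

Lemma gam_leq i j : 0 < i <= j -> gam i <= gam j.
Proof.
case: i j => [|i] [|j] //= le_ij.
apply: (homo_leq (f := fun k => gam k.+1) leqnn leq_trans) => // k.
exact/ltnW/gam_ltS.
Qed.

Lemma gam_min_admissible n x :
  1 < n -> gam n < x -> admissible_after n x -> gam n.+1 <= x.
Proof.
move=> lt1n lt_x adm; rewrite leqNgt; apply/negP => lt_x'.
have [_ _ gam_min] := greedy n.+1 lt1n.
exact: gam_min x lt_x lt_x' (DgSeq_rcons (DgSeq_gprefix n) adm).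
Qed.

Lemma gam_le_sum {n} : 1 < n -> gam n.+1 <= sumn (gprefix gam n) + 1.
Proof.
move=> lt1n; apply: gam_min_admissible => // [|t].
  by case: n lt1n => // n _; rewrite gprefixS sumn_rcons addn1 ltnS leq_addl.
by rewrite (@nreps_gt_sumn _ (t + _)) ?add0n ?rep_le // addnA addn1 ltnS leq_addl.
Qed.

Lemma admissible_gap k : admissible_after k (gam k.+2 - gam k.+1).
Proof.
move=> t; set d := gam k.+2 - gam k.+1.
have gam_k2 : t + gam k.+2 = t + d + gam k.+1.
  by rewrite -addnA subnK // ltnW // gam_ltS.
have rep_d : rep k (t + d) <= rep k.+1 (t + gam k.+2).
  by rewrite gam_k2 repS_addn leq_addl.
have := rep_le k.+2 (t + gam k.+2); rewrite repS_addn.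
by apply: leq_trans; rewrite leq_add ?rep_mono.
Qed.

Lemma admissible_small {n x} : admissible_after n x -> x < gam n.+1 ->
  x <= gam 2 \/ exists2 j, 2 < j <= n & x = gam j.
Proof.
elim: n => [|n IH] adm lt_x; first by left; rewrite ltnW // (ltn_trans lt_x).
case: (ltngtP x (gam n.+1)) => [lt_xn|lt_nx|->].
- have [|[j /andP[lt2j le_jn] ->]] := IH (admissible_mono (leqnSn n) adm) lt_xn.
    by left.
  by right; exists j; rewrite ?lt2j ?leqW.
- case: n IH adm lt_x lt_nx => [|n] _ adm lt_x lt_nx; first by left; apply: ltnW.
  by move: lt_x; rewrite ltnNge gam_min_admissible.
- have [le_n2|lt2n] := leqP n.+1 2; first by left; apply: gam_leq.
  by right; exists n.+1; rewrite ?lt2n ?leqnn.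
Qed.

Lemma admissible_gam_double {m j} t :
  0 < j <= m -> admissible_after m (gam j) -> 2 * rep j.-1 t <= g.
Proof.
case: j => // j /= le_jm adm; apply: leq_trans _ (adm t); rewrite mul2n -addnn.
apply: leq_add; last exact: rep_mono (ltnW le_jm).
by apply: leq_trans _ (rep_mono _ _ _ le_jm); rewrite /= repS_addn leq_addl.
Qed.

(* If gam n.+2 = gam n.+1 + d, then c' := c + gam n.+1 inherits the representations
   of c, while c' + d = c + gam n.+2 gets those of c + d (adding gam n.+1) and
   those of c (adding gam n.+2). *)
Lemma rep_unbounded_of_gap_often {d} :
  (forall n0, exists2 n, n0 <= n & gam n.+2 = gam n.+1 + d) ->
  forall k, exists N c, 0 < rep N c /\ k <= rep N (c + d).
Proof.
move=> often; elim=> [|k [N [c [rep_c le_k]]]].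
  by exists 0, 0; rewrite /gprefix /= nreps_nil.
have [n le_Nn gap] := often N.
have rep_c' : 0 < rep n c by apply: leq_trans rep_c (rep_mono _ _ _ le_Nn).
exists n.+2, (c + gam n.+1); split.
  apply: leq_trans rep_c' (leq_trans _ (rep_mono _ _ _ (leqnSn n.+1))).
  by rewrite /= repS_addn leq_addl.
have rep_cd : k <= rep n.+1 (c + gam n.+2).
  rewrite gap addnCA addnC repS_addn.
  exact: leq_trans le_k (leq_trans (rep_mono _ _ _ le_Nn) (leq_addl _ _)).
rewrite -addnA -gap repS_addn -addn1 leq_add //.
exact: leq_trans rep_c' (rep_mono _ _ _ (leqnSn n)).
Qed.

Lemma gap_eventually_neq d : exists n0, forall n, n0 <= n -> gam n.+2 != gam n.+1 + d.
Proof.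
apply: NNPP => never.
have often n0 : exists2 n, n0 <= n & gam n.+2 = gam n.+1 + d.
  apply: NNPP => none; apply: never; exists n0 => n le_n0n.
  by apply/eqP => gap; apply: none; exists n.
have [N [c [_ ]]] := rep_unbounded_of_gap_often often g.+1.
by rewrite ltnNge rep_le.
Qed.

Lemma gap_eventually_gt D : exists n0, forall n, n0 <= n -> gam n.+1 + D < gam n.+2.
Proof.
elim: D => [|D [n1 gt_D]]; first by exists 0 => n _; rewrite addn0 gam_ltS.
have [n2 neq_D1] := gap_eventually_neq D.+1.
exists (maxn n1 n2) => n; rewrite geq_max => /andP[le_n1 le_n2].
by rewrite ltn_neqAle eq_sym neq_D1 // addnS gt_D.
Qed.

Lemma exists_rep_gt_half : exists J t, g < 2 * rep J t.
Proof.
apply: NNPP => none.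
have half J t : 2 * rep J t <= g.
  by rewrite leqNgt; apply/negP => gt_g; apply: none; exists J, t.
have adm n x : admissible_after n x.
  by move=> t; have := half n (t + x); have := half n t; lia.
have [n0 gap] := gap_eventually_gt 1.
have := gap n0.+1 (leqnSn n0).
by rewrite ltnNge gam_min_admissible // addn1.
Qed.

Lemma gam_doubles_eventually : exists n0, forall n, n0 <= n -> 2 * gam n.+1 <= gam n.+2.
Proof.
have [J [t heavy]] := exists_rep_gt_half.
have [n0 gap] := gap_eventually_gt (gam J.+2).
exists n0 => k le_n0k; rewrite leqNgt; apply/negP => lt_k2.
have lt_d : gam k.+2 - gam k.+1 < gam k.+1 by lia.
have := gap k le_n0k.
have [le_d2|[j /andP[lt2j le_jk] d_j]] := admissible_small (admissible_gap k) lt_d.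
  by have := gam_leq 2 J.+2 isT; lia.
have [le_jJ|lt_Jj] := leqP j J.
  have le_jJ2 : 0 < j <= J.+2 by lia.
  by have := gam_leq _ _ le_jJ2; lia.
have adm_j : admissible_after k (gam j) by rewrite -d_j; apply: admissible_gap.
have pos_j : 0 < j <= k by lia.
have le_Jj : J <= j.-1 by lia.
have := rep_mono t _ _ le_Jj; have := admissible_gam_double t pos_j adm_j; lia.
Qed.

Lemma gam_eventually_double : exists n0, forall n, n0 <= n -> gam n.+2 = 2 * gam n.+1.
Proof.
have [n1 dbl] := gam_doubles_eventually.
have sumS n : sumn (gprefix gam n.+1) = sumn (gprefix gam n) + gam n.+1.
  by rewrite gprefixS sumn_rcons.
pose excess n := sumn (gprefix gam n) + 1 - gam n.+1.
have [n0 le_n0 const] : exists2 n0, maxn n1 2 <= n0 &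
    forall n, n0 <= n -> excess n = excess n0.
  apply: nonincreasing_eventually_constant => n; rewrite geq_max => /andP[le_n1n _].
  by rewrite /excess sumS; have := dbl n le_n1n; lia.
move: le_n0; rewrite geq_max => /andP[_ le_2n0].
exists n0 => n le_n0n; have := const n.+1 (leqW le_n0n).
rewrite -(const n le_n0n) /excess sumS.
have := gam_le_sum (leq_trans le_2n0 le_n0n).
have := gam_le_sum (leq_trans le_2n0 (leqW le_n0n)).
rewrite sumS; lia.
Qed.
End GreedyDgSequence.

Theorem theorem5 (g a b : nat) (gam : nat -> nat) :
  1 <= g -> 0 < a -> a < b ->
  gam 1 = a -> gam 2 = b ->
  (forall r, 3 <= r ->
     [/\ gam r.-1 < gam r,
         DgSeq g (gprefix gam r) &
         forall x, gam r.-1 < x -> x < gam r ->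
           ~ DgSeq g (rcons (gprefix gam r.-1) x)]) ->
  exists n0, forall n, n0 <= n -> gam n = 2 * gam n.-1.
Proof.
move=> _ _ lt_ab gam1 gam2 greedy.
have gam_lt12 : gam 1 < gam 2 by rewrite gam1 gam2.
have [n0 dbl] := gam_eventually_double g gam gam_lt12 greedy.
by exists n0.+2 => -[|[|n]] // /dbl.
Qed.
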